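(* The calculus $\lambda^a$ terminates: if $\Gamma\vdash^a D:A$, then there is no infinite reduction sequence $D\to D_1\to D_2\to\cdots$ in $\lambda^a$.
   Context: All terms are considered up to $\alpha$-renaming; $[z/y]D$ is capture-avoiding substitution. Calculus $\lambda^a$: values $V::=*\mid\lambda y_1\ldots y_n.D$ ($n\ge1$); declarations $D::=\mathsf{let}\ x_1=V_1\ \mathsf{in}\cdots\mathsf{let}\ x_m=V_m\ \mathsf{in}\ M$ ($m\ge0$); terms $M::=x\mid @(M,M_1,\ldots,M_n)$ ($n\ge1$). Convention: if $D_i=\mathsf{let}\,(x=V)^*_i\ \mathsf{in}\ M_i$, then $@(D_0,\ldots,D_n)$ abbreviates the declaration obtained by putting all these let-prefixes (renamed apart) in front of $@(M_0,\ldots,M_n)$. Evaluation contexts $E::=\mathsf{let}\ x=V\ \mathsf{in}\ [\,]\mid E[@(x_1,\ldots,x_k,[\,],M_1,\ldots,M_l)]$ ($k,l\ge0$); writing $E=\mathsf{let}\,(x'=V')^*\ \mathsf{in}\ E'$ with $E'$ not starting with a let, $E[\mathsf{let}\,(x=V)^*\ \mathsf{in}\ M]$ denotes $\mathsf{let}\,(x=V)^*\ \mathsf{in}\ \mathsf{let}\,(x'=V')^*\ \mathsf{in}\ E'[M]$ (no capture). Structural congruence $\equiv$: least equivalence closed under $\alpha$-renaming and the syntactic operators with $\mathsf{let}\,x_1=V_1\,\mathsf{in}\,\mathsf{let}\,x_2=V_2\,\mathsf{in}\,D\equiv\mathsf{let}\,x_2=V_2\,\mathsf{in}\,\mathsf{let}\,x_1=V_1\,\mathsf{in}\,D$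 if $x_1\notin FV(V_2)$, $x_2\notin FV(V_1)$, and $\mathsf{let}\,x=V\,\mathsf{in}\,D\equiv D$ if $x\notin FV(D)$. Reduction: least relation containing $E[\mathsf{let}\,x=\lambda y_1\ldots y_n.D\ \mathsf{in}\ E'[@(x,z_1,\ldots,z_n)]]\to E[\mathsf{let}\,x=\lambda y_1\ldots y_n.D\ \mathsf{in}\ E'[[z_1/y_1,\ldots,z_n/y_n]D]]$ ($z_i$ variables) and closed under $\equiv$ on both sides. Types $A::=\langle 1\rangle\mid\langle A_1\to\cdots\to A_n\to A\rangle$ ($n\ge1$). Typing ($\Gamma$ a finite map from variables to types): $\Gamma\vdash^a x:A$ if $x:A\in\Gamma$; $\Gamma\vdash^a\mathsf{let}\,x=*\,\mathsf{in}\,D:A$ if $\Gamma,x:\langle1\rangle\vdash^a D:A$; $\Gamma\vdash^a\mathsf{let}\,x=\lambda y_1\ldots y_n.D'\,\mathsf{in}\,D:B$ if $\Gamma,y_1:A_1,\ldots,y_n:A_n\vdash^a D':C$ and $\Gamma,x:\langle A_1\to\cdots\to A_n\to C\rangle\vdash^a D:B$; $\Gamma\vdash^a @(M,N_1,\ldots,N_n):B$ if $\Gamma\vdash^a M:\langle A_1\to\cdots\to A_n\to B\rangle$ and $\Gamma\vdash^a N_i:A_i$ for all $i$. *)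

From Stdlib Require Import List Arith.
Import ListNotations.

Definition var := nat.

(** * Syntax (named, first-order).
    V ::= * | \y y1..yn. D   (n >= 1, stored as first param + rest)
    D ::= let x = V in D | M
    M ::= x | @(M, N, N2, ..., Nn)   (at least one argument) *)
Inductive value : Type :=
| VStar : value
| VLam  : var -> list var -> decl -> value
with decl : Type :=
| DLet  : var -> value -> decl -> decl
| DTm   : term -> decl
with term : Type :=
| TVar  : var -> term
| TApp  : term -> term -> list term -> term.

Definition memv (x : var) (l : list var) : bool := existsb (Nat.eqb x) l.

Fixpoint fv_val (V : value) : list var :=
  match V with
  | VStar => []
  | VLam y ys D => filter (fun v => negb (memv v (y :: ys))) (fv_decl D)
  end
with fv_decl (D : decl) : list var :=
  match D with
  | DLet x V D => fv_val V ++ filter (fun v => negb (Nat.eqb v x)) (fv_decl D)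
  | DTm M => fv_term M
  end
with fv_term (M : term) : list var :=
  match M with
  | TVar x => [x]
  | TApp M N Ns => fv_term M ++ fv_term N ++ concat (map fv_term Ns)
  end.

Fixpoint bv_val (V : value) : list var :=
  match V with
  | VStar => []
  | VLam y ys D => y :: ys ++ bv_decl D
  end
with bv_decl (D : decl) : list var :=
  match D with
  | DLet x V D => x :: bv_val V ++ bv_decl D
  | DTm _ => []
  end.

(** * Naive renaming of free variables (capture-avoiding whenever no variable
    in the range of the renaming is bound in the declaration). *)
Fixpoint ren_val (s : var -> var) (V : value) : value :=
  match V with
  | VStar => VStar
  | VLam y ys D =>
      VLam y ys (ren_decl (fun v => if memv v (y :: ys) then v else s v) D)
  end
with ren_decl (s : var -> var) (D : decl) : decl :=
  match D with
  | DLet x V D =>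
      DLet x (ren_val s V) (ren_decl (fun v => if Nat.eqb v x then v else s v) D)
  | DTm M => DTm (ren_term s M)
  end
with ren_term (s : var -> var) (M : term) : term :=
  match M with
  | TVar x => TVar (s x)
  | TApp M N Ns => TApp (ren_term s M) (ren_term s N) (map (ren_term s) Ns)
  end.

(** The simultaneous substitution [z1/y1, ..., zn/yn] as a map on variables
    (should some y_i coincide, the later one wins, matching the context
    extension Gamma, y1:A1, ..., yn:An of the typing rule). *)
Definition subst_map (ys zs : list var) : var -> var :=
  fold_left (fun f (p : var * var) => fun v => if Nat.eqb v (fst p) then snd p else f v)
            (combine ys zs) (fun v => v).

(** * Alpha-equivalence: equality of de Bruijn (nameless) representations. *)
Inductive nvalue : Type :=
| NStar : nvalue
| NLam  : nat -> ndecl -> nvalue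
with ndecl : Type :=
| NLet  : nvalue -> ndecl -> ndecl
| NTm   : nterm -> ndecl
with nterm : Type :=
| NBound : nat -> nterm
| NFree  : var -> nterm
| NApp   : nterm -> nterm -> list nterm -> nterm.

Fixpoint idx (x : var) (env : list var) : option nat :=
  match env with
  | [] => None
  | y :: e => if Nat.eqb x y then Some 0 else option_map S (idx x e)
  end.

Fixpoint db_val (env : list var) (V : value) : nvalue :=
  match V with
  | VStar => NStar
  | VLam y ys D => NLam (length (y :: ys)) (db_decl (rev (y :: ys) ++ env) D)
  end
with db_decl (env : list var) (D : decl) : ndecl :=
  match D with
  | DLet x V D => NLet (db_val env V) (db_decl (x :: env) D)
  | DTm M => NTm (db_term env M)
  end
with db_term (env : list var) (M : term) : nterm :=
  match M with
  | TVar x => match idx x env with Some i => NBound i | None => NFree x end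
  | TApp M N Ns => NApp (db_term env M) (db_term env N) (map (db_term env) Ns)
  end.

Definition alpha_eq (D1 D2 : decl) : Prop := db_decl [] D1 = db_decl [] D2.

Inductive sc_val : value -> value -> Prop :=
| scv_refl V : sc_val V V
| scv_lam y ys D D' : sc_decl D D' -> sc_val (VLam y ys D) (VLam y ys D')
| scv_sym V V' : sc_val V V' -> sc_val V' V
| scv_trans V1 V2 V3 : sc_val V1 V2 -> sc_val V2 V3 -> sc_val V1 V3
with sc_decl : decl -> decl -> Prop :=
| scd_alpha D D' : alpha_eq D D' -> sc_decl D D'
| scd_swap x1 V1 x2 V2 D :
    x1 <> x2 -> ~ In x1 (fv_val V2) -> ~ In x2 (fv_val V1) ->
    sc_decl (DLet x1 V1 (DLet x2 V2 D)) (DLet x2 V2 (DLet x1 V1 D))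
| scd_gc x V D : ~ In x (fv_decl D) -> sc_decl (DLet x V D) D
| scd_let_val x V V' D : sc_val V V' -> sc_decl (DLet x V D) (DLet x V' D)
| scd_let_decl x V D D' : sc_decl D D' -> sc_decl (DLet x V D) (DLet x V D')
| scd_sym D D' : sc_decl D D' -> sc_decl D' D
| scd_trans D1 D2 D3 : sc_decl D1 D2 -> sc_decl D2 D3 -> sc_decl D1 D3.

Fixpoint plets (L : list (var * value)) (D : decl) : decl :=
  match L with
  | [] => D
  | (x, V) :: L => DLet x V (plets L D)
  end.

Fixpoint split_decl (D : decl) : list (var * value) * term :=
  match D with
  | DLet x V D => let (L, M) := split_decl D in ((x, V) :: L, M)
  | DTm M => ([], M)
  end.

(** Application frames @(x1,...,xk,[ ],M1,...,Ml), listed from the outside in;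
    a frame must have k + l >= 1 (an application has at least one argument). *)
Inductive ectx : Type :=
| Hole : ectx
| Frame : list var -> ectx -> list term -> ectx.

Definition mkapp (l : list term) : term :=
  match l with
  | [] => TVar 0 (* never used on well-formed frames *)
  | [M] => M
  | M :: N :: Ns => TApp M N Ns
  end.

Fixpoint plug (F : ectx) (t : term) : term :=
  match F with
  | Hole => t
  | Frame xs F Ms => mkapp (map TVar xs ++ plug F t :: Ms)
  end.

Fixpoint ectx_ok (F : ectx) : Prop :=
  match F with
  | Hole => True
  | Frame xs F Ms => (xs <> [] \/ Ms <> []) /\ ectx_ok F
  end.

(** Base step (on representatives whose bound variables are suitably named
    apart): in the let-prefix there is a binding x = \y1..yn.Dl, not
    re-bound later, and the body has @(x,z1,...,zn) in evaluation position;
    the redex is replaced by the body of [z/y]Dl while the let-prefix of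
    [z/y]Dl is appended to the let-prefix of the whole declaration. *)
Inductive step_base : decl -> decl -> Prop :=
| step_beta (L1 L2 : list (var * value)) (x y z : var) (ys zs : list var)
    (Dl : decl) (F : ectx) :
    length ys = length zs ->
    ectx_ok F ->
    ~ In x (map fst L2) ->
    (* no capture when substituting z for y in Dl *)
    (forall w, In w (z :: zs) -> ~ In w (bv_decl Dl)) ->
    (* free variables of the function are not re-bound by x or by L2 *)
    (forall w, In w (fv_val (VLam y ys Dl)) -> ~ In w (x :: map fst L2)) ->
    (* the floated lets do not capture free variables of the body *)
    (forall w, In w (map fst (fst (split_decl (ren_decl (subst_map (y :: ys) (z :: zs)) Dl)))) ->
       ~ In w (fv_term (plug F (TApp (TVar x) (TVar z) (map TVar zs))))) ->
    step_base
      (plets (L1 ++ (x, VLam y ys Dl) :: L2)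
             (DTm (plug F (TApp (TVar x) (TVar z) (map TVar zs)))))
      (let (Ld, N) := split_decl (ren_decl (subst_map (y :: ys) (z :: zs)) Dl) in
       plets (L1 ++ (x, VLam y ys Dl) :: L2 ++ Ld) (DTm (plug F N))).

Definition red (D D' : decl) : Prop :=
  exists D1 D2, sc_decl D D1 /\ step_base D1 D2 /\ sc_decl D2 D'.

Inductive ty : Type :=
| TyUnit : ty
| TyArr  : ty -> list ty -> ty -> ty.    (* <A1 -> A2 -> ... -> An -> B>, n >= 1 *)

(** Typing contexts: finite maps from variables to types, as association
    lists; extension Gamma, x:A conses (x, A), overriding earlier entries. *)
Definition ctx := list (var * ty).

Fixpoint lookup (G : ctx) (x : var) : option ty :=
  match G with
  | [] => None
  | (y, A) :: G => if Nat.eqb x y then Some A else lookup G x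
  end.

Definition extend (G : ctx) (ys : list var) (As : list ty) : ctx :=
  rev (combine ys As) ++ G.

Inductive typ_term : ctx -> term -> ty -> Prop :=
| ty_var G x A : lookup G x = Some A -> typ_term G (TVar x) A
| ty_app G M N Ns A1 As B :
    typ_term G M (TyArr A1 As B) ->
    typ_term G N A1 ->
    Forall2 (typ_term G) Ns As ->
    typ_term G (TApp M N Ns) B.

Inductive typ_decl : ctx -> decl -> ty -> Prop :=
| ty_tm G M A : typ_term G M A -> typ_decl G (DTm M) A
| ty_let_star G x D A :
    typ_decl ((x, TyUnit) :: G) D A -> typ_decl G (DLet x VStar D) A
| ty_let_lam G x y ys Dl D A1 As C B :
    length ys = length As ->
    typ_decl (extend G (y :: ys) (A1 :: As)) Dl C ->
    typ_decl ((x, TyArr A1 As C) :: G) D B ->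
    typ_decl G (DLet x (VLam y ys Dl) D) B.

(* Substituting every let-bound value into its scope turns a declaration into
   a term of an n-ary lambda calculus with de Bruijn indices, whose values are
   free variables, [*] and lambdas.  Structurally congruent declarations unfold
   to the same term, a reduction step becomes a beta-step in a left-to-right
   call-by-value evaluation context, and typing is preserved.  A big-step
   evaluation of such a term (which may end stuck) counts its beta-steps, and
   every small step lowers that count by exactly one, so a term that evaluates
   admits no infinite reduction; a Tait-style logical relation shows that every
   typed term evaluates. *)

From Stdlib Require Import List Arith Lia Bool.
Import ListNotations.

(** * Nameless n-ary lambda terms *)

(* [tLam n b] binds the indices [0 .. n-1] of [b], index [0] being the last
   parameter; [tApp (f :: args)] applies [f] to [args]. *)
Inductive tm : Type :=
| tStar : tm
| tFree : var -> tm
| tBound : nat -> tm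
| tLam : nat -> tm -> tm
| tApp : list tm -> tm.

Section TmInd.
Variable P : tm -> Prop.
Hypothesis P_star : P tStar.
Hypothesis P_free : forall x, P (tFree x).
Hypothesis P_bound : forall i, P (tBound i).
Hypothesis P_lam : forall n b, P b -> P (tLam n b).
Hypothesis P_app : forall l, Forall P l -> P (tApp l).

Fixpoint tm_nested_ind (t : tm) : P t :=
  match t with
  | tStar => P_star
  | tFree x => P_free x
  | tBound i => P_bound i
  | tLam n b => P_lam n b (tm_nested_ind b)
  | tApp l => P_app l ((fix go (l : list tm) : Forall P l :=
      match l with
      | [] => Forall_nil _
      | t :: l => Forall_cons _ (tm_nested_ind t) (go l)
      end) l)
  end.
End TmInd.

Definition up_ren (n : nat) (r : nat -> nat) (i : nat) : nat :=
  if i <? n then i else n + r (i - n).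

Fixpoint ren (r : nat -> nat) (t : tm) : tm :=
  match t with
  | tStar => tStar
  | tFree x => tFree x
  | tBound i => tBound (r i)
  | tLam n b => tLam n (ren (up_ren n r) b)
  | tApp l => tApp (map (ren r) l)
  end.

Definition up_subst (n : nat) (s : nat -> tm) (i : nat) : tm :=
  if i <? n then tBound i else ren (plus n) (s (i - n)).

Fixpoint subst (s : nat -> tm) (t : tm) : tm :=
  match t with
  | tStar => tStar
  | tFree x => tFree x
  | tBound i => s i
  | tLam n b => tLam n (subst (up_subst n s) b)
  | tApp l => tApp (map (subst s) l)
  end.

Lemma up_ren_shift n r i : up_ren n r (n + i) = n + r i.
Proof.
  unfold up_ren. replace (n + i <? n) with false by (symmetry; apply Nat.ltb_ge; lia).
  f_equal. f_equal. lia.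
Qed.

Lemma up_subst_shift n s i : up_subst n s (n + i) = ren (plus n) (s i).
Proof.
  unfold up_subst. replace (n + i <? n) with false by (symmetry; apply Nat.ltb_ge; lia).
  do 3 f_equal. lia.
Qed.

Lemma ren_ext t : forall r1 r2, (forall i, r1 i = r2 i) -> ren r1 t = ren r2 t.
Proof.
  induction t using tm_nested_ind; intros r1 r2 Hr; simpl; f_equal; auto.
  - apply IHt. intro i. unfold up_ren. rewrite Hr. reflexivity.
  - apply map_ext_Forall. eapply Forall_impl; [|eassumption]. simpl; auto.
Qed.

Lemma subst_ext t : forall s1 s2, (forall i, s1 i = s2 i) -> subst s1 t = subst s2 t.
Proof.
  induction t using tm_nested_ind; intros s1 s2 Hs; simpl; f_equal; auto.
  - apply IHt. intro i. unfold up_subst. rewrite Hs. reflexivity.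
  - apply map_ext_Forall. eapply Forall_impl; [|eassumption]. simpl; auto.
Qed.

Lemma ren_ren t : forall r1 r2, ren r1 (ren r2 t) = ren (fun i => r1 (r2 i)) t.
Proof.
  induction t using tm_nested_ind; intros r1 r2; simpl; f_equal; auto.
  - rewrite IHt. apply ren_ext. intro i. unfold up_ren at 2 3.
    destruct (i <? n) eqn:E.
    + unfold up_ren. rewrite E. reflexivity.
    + apply up_ren_shift.
  - rewrite map_map. apply map_ext_Forall. eapply Forall_impl; [|eassumption]. simpl; auto.
Qed.

Lemma subst_ren t : forall s r, subst s (ren r t) = subst (fun i => s (r i)) t.
Proof.
  induction t using tm_nested_ind; intros s r; simpl; f_equal; auto.
  - rewrite IHt. apply subst_ext. intro i. unfold up_ren, up_subst at 2.
    destruct (i <? n) eqn:E.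
    + unfold up_subst. rewrite E. reflexivity.
    + apply up_subst_shift.
  - rewrite map_map. apply map_ext_Forall. eapply Forall_impl; [|eassumption]. simpl; auto.
Qed.

Lemma ren_subst t : forall s r, ren r (subst s t) = subst (fun i => ren r (s i)) t.
Proof.
  induction t using tm_nested_ind; intros s r; simpl; f_equal; auto.
  - rewrite IHt. apply subst_ext. intro i. unfold up_subst.
    destruct (i <? n) eqn:E; simpl.
    + unfold up_ren. rewrite E. reflexivity.
    + rewrite !ren_ren. apply ren_ext. intro j. apply up_ren_shift.
  - rewrite map_map. apply map_ext_Forall. eapply Forall_impl; [|eassumption]. simpl; auto.
Qed.

Lemma subst_up_subst_shift n s t :
  subst (up_subst n s) (ren (plus n) t) = ren (plus n) (subst s t).
Proof.
  rewrite subst_ren, ren_subst. apply subst_ext. intro i. apply up_subst_shift.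
Qed.

Lemma subst_subst t :
  forall s1 s2, subst s2 (subst s1 t) = subst (fun i => subst s2 (s1 i)) t.
Proof.
  induction t using tm_nested_ind; intros s1 s2; simpl; f_equal; auto.
  - rewrite IHt. apply subst_ext. intro i. unfold up_subst at 2.
    destruct (i <? n) eqn:E; simpl.
    + unfold up_subst. rewrite E. reflexivity.
    + rewrite subst_up_subst_shift. unfold up_subst. rewrite E. reflexivity.
  - rewrite map_map. apply map_ext_Forall. eapply Forall_impl; [|eassumption]. simpl; auto.
Qed.

Lemma subst_id t : forall s, (forall i, s i = tBound i) -> subst s t = t.
Proof.
  induction t using tm_nested_ind; intros s Hs; simpl; f_equal; auto.
  - apply IHt. intro i. unfold up_subst. destruct (i <? n) eqn:E; auto.
    rewrite Hs. simpl. f_equal. apply Nat.ltb_ge in E. lia.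
  - rewrite <- map_id. apply map_ext_Forall. eapply Forall_impl; [|eassumption]. simpl; auto.
Qed.

(* Parameters are replaced by [args] (index [0] by the last one); the indices
   outside the binder are shifted down by the arity. *)
Definition args_subst (args : list tm) (i : nat) : tm :=
  nth i (rev args) (tBound (i - length args)).

Lemma args_subst_shift args t : subst (args_subst args) (ren (plus (length args)) t) = t.
Proof.
  rewrite subst_ren. apply subst_id. intro i. unfold args_subst.
  rewrite nth_overflow by (rewrite length_rev; lia). f_equal. lia.
Qed.

(** * Simple types for nameless terms *)

Inductive tm_ty (G : ctx) : list ty -> tm -> ty -> Prop :=
| tm_ty_star D : tm_ty G D tStar TyUnit
| tm_ty_free D x A : lookup G x = Some A -> tm_ty G D (tFree x) A
| tm_ty_bound D i A : nth_error D i = Some A -> tm_ty G D (tBound i) A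
| tm_ty_lam D n b A1 As B :
    n = S (length As) -> tm_ty G (rev (A1 :: As) ++ D) b B ->
    tm_ty G D (tLam n b) (TyArr A1 As B)
| tm_ty_app D f a args A1 As B :
    tm_ty G D f (TyArr A1 As B) -> tm_ty G D a A1 -> tm_tys G D args As ->
    tm_ty G D (tApp (f :: a :: args)) B
with tm_tys (G : ctx) : list ty -> list tm -> list ty -> Prop :=
| tm_tys_nil D : tm_tys G D [] []
| tm_tys_cons D t ts A As :
    tm_ty G D t A -> tm_tys G D ts As -> tm_tys G D (t :: ts) (A :: As).

Scheme tm_ty_ind' := Induction for tm_ty Sort Prop
with tm_tys_ind' := Induction for tm_tys Sort Prop.
Combined Scheme tm_ty_mutind from tm_ty_ind', tm_tys_ind'.

Lemma tm_ty_ren G :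
  (forall D t A, tm_ty G D t A -> forall D' r,
     (forall i B, nth_error D i = Some B -> nth_error D' (r i) = Some B) ->
     tm_ty G D' (ren r t) A) /\
  (forall D ts As, tm_tys G D ts As -> forall D' r,
     (forall i B, nth_error D i = Some B -> nth_error D' (r i) = Some B) ->
     tm_tys G D' (map (ren r) ts) As).
Proof.
  apply tm_ty_mutind; intros; simpl; try (econstructor; eauto; fail).
  constructor; auto. apply H. intros i B0 Hi. unfold up_ren.
  assert (Hn : length (rev (A1 :: As)) = n) by (rewrite length_rev; simpl; lia).
  destruct (i <? n) eqn:E.
  - apply Nat.ltb_lt in E. rewrite nth_error_app1 in * by lia. auto.
  - apply Nat.ltb_ge in E. rewrite nth_error_app2 in * by lia.
    replace (n + r (i - n) - length (rev (A1 :: As))) with (r (i - n)) by lia.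
    apply H0. rewrite <- Hi. f_equal. lia.
Qed.

(** * Weak call-by-value evaluation *)

Definition is_value (t : tm) : bool :=
  match t with tStar | tFree _ | tLam _ _ => true | _ => false end.

(* [eval t k r]: evaluating [t] performs [k] beta-steps and ends in the value
   [w] if [r = Some w], or gets stuck if [r = None]. *)
Inductive eval : tm -> nat -> option tm -> Prop :=
| eval_val t : is_value t = true -> eval t 0 (Some t)
| eval_bound i : eval (tBound i) 0 None
| eval_app l k1 vs k2 r : eval_list l k1 (Some vs) -> eval_apply vs k2 r -> eval (tApp l) (k1 + k2) r
| eval_app_stuck l k : eval_list l k None -> eval (tApp l) k None
with eval_list : list tm -> nat -> option (list tm) -> Prop :=
| eval_list_nil : eval_list [] 0 (Some [])
| eval_list_cons t l k1 v k2 r : eval t k1 (Some v) -> eval_list l k2 r ->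
    eval_list (t :: l) (k1 + k2) (option_map (cons v) r)
| eval_list_stuck t l k : eval t k None -> eval_list (t :: l) k None
with eval_apply : list tm -> nat -> option tm -> Prop :=
| eval_apply_beta n b args k r : length args = n -> eval (subst (args_subst args) b) k r ->
    eval_apply (tLam n b :: args) (S k) r
| eval_apply_stuck vs : (forall n b args, vs = tLam n b :: args -> length args <> n) ->
    eval_apply vs 0 None.

Inductive tm_ctx : Type :=
| cHole : tm_ctx
| cFrame : list tm -> tm_ctx -> list tm -> tm_ctx.

Definition mk_app (l : list tm) : tm :=
  match l with [t] => t | _ => tApp l end.

Fixpoint plug_tm (C : tm_ctx) (t : tm) : tm :=
  match C with
  | cHole => t
  | cFrame vs C ts => mk_app (vs ++ plug_tm C t :: ts)
  end.

Fixpoint values_left (C : tm_ctx) : Prop :=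
  match C with
  | cHole => True
  | cFrame vs C _ => Forall (fun v => is_value v = true) vs /\ values_left C
  end.

Inductive tm_step : tm -> tm -> Prop :=
| tm_step_beta C n b args :
    values_left C -> Forall (fun v => is_value v = true) args -> length args = n ->
    tm_step (plug_tm C (tApp (tLam n b :: args))) (plug_tm C (subst (args_subst args) b)).

Lemma eval_value t k r : is_value t = true -> eval t k r -> k = 0 /\ r = Some t.
Proof. intros Hv He. inversion He; subst; simpl in *; try discriminate; auto. Qed.

Lemma eval_list_values l k r :
  Forall (fun v => is_value v = true) l -> eval_list l k r -> k = 0 /\ r = Some l.
Proof.
  intros Hl. revert k r. induction Hl as [|v l Hv Hl IH]; intros k r He; inversion He; subst.
  - auto.
  - match goal with H : eval v _ _ |- _ => apply (eval_value _ _ _ Hv) in H as [-> [= ->]] end.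
    match goal with H : eval_list l _ _ |- _ => apply IH in H as [-> ->] end. auto.
  - match goal with H : eval v _ _ |- _ => apply (eval_value _ _ _ Hv) in H as [_ [=]] end.
Qed.

Definition eval_drops (t t' : tm) : Prop :=
  forall k r, eval t k r -> exists k', k = S k' /\ eval t' k' r.

Lemma eval_list_drops l1 p p' l2 :
  Forall (fun v => is_value v = true) l1 -> eval_drops p p' ->
  forall k r, eval_list (l1 ++ p :: l2) k r -> exists k', k = S k' /\ eval_list (l1 ++ p' :: l2) k' r.
Proof.
  intros Hl1 Hp. induction Hl1 as [|v l1 Hv Hl1 IH]; simpl; intros k r He.
  - inversion He; subst; match goal with H : eval p _ _ |- _ => apply Hp in H as [k' [-> Hk']] end.
    + eexists. split; [|econstructor; eauto]. lia.
    + exists k'. split; auto. apply eval_list_stuck; auto.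
  - inversion He; subst.
    + match goal with H : eval v _ _ |- _ => apply (eval_value _ _ _ Hv) in H as [-> [= ->]] end.
      match goal with H : eval_list _ _ _ |- _ => apply IH in H as [k' [-> Hk']] end.
      exists k'. split; auto. apply (eval_list_cons _ _ 0); auto. apply eval_val; auto.
    + match goal with H : eval v _ _ |- _ => apply (eval_value _ _ _ Hv) in H as [_ [=]] end.
Qed.

Lemma eval_drops_app l1 p p' l2 :
  Forall (fun v => is_value v = true) l1 -> eval_drops p p' ->
  eval_drops (tApp (l1 ++ p :: l2)) (tApp (l1 ++ p' :: l2)).
Proof.
  intros Hl1 Hp k r He. inversion He; subst; [discriminate| |];
    match goal with H : eval_list _ _ _ |- _ =>
      destruct (eval_list_drops _ _ _ _ Hl1 Hp _ _ H) as [k' [-> Hk']] end.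
  - eexists. split; [|econstructor; eauto]. lia.
  - exists k'. split; auto. apply eval_app_stuck; auto.
Qed.

Lemma mk_app_long l : 2 <= length l -> mk_app l = tApp l.
Proof. destruct l as [|a [|b l]]; simpl; intros; try lia; auto. Qed.

Lemma eval_drops_plug C t t' :
  values_left C -> eval_drops t t' -> eval_drops (plug_tm C t) (plug_tm C t').
Proof.
  induction C as [|vs C IH ts]; simpl; auto. intros [Hvs HC] Ht.
  specialize (IH HC Ht).
  destruct vs as [|v vs]; [destruct ts as [|u ts]|].
  - exact IH.
  - rewrite !mk_app_long by (simpl; lia). apply (eval_drops_app []); auto.
  - rewrite !mk_app_long by (simpl; rewrite length_app; simpl; lia). apply eval_drops_app; auto.
Qed.

Lemma eval_drops_beta n b args :
  Forall (fun v => is_value v = true) args -> length args = n ->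
  eval_drops (tApp (tLam n b :: args)) (subst (args_subst args) b).
Proof.
  intros Hargs Hn k r He.
  assert (Hl : Forall (fun v => is_value v = true) (tLam n b :: args)) by (constructor; auto).
  inversion He; subst; [discriminate| |];
    match goal with H : eval_list _ _ _ |- _ => apply (eval_list_values _ _ _ Hl) in H as [-> E] end.
  - injection E as E; subst.
    match goal with H : eval_apply _ _ _ |- _ => inversion H; subst end.
    + eexists. eauto.
    + exfalso. match goal with H : forall n b args, _ |- _ => eapply H; eauto end.
  - discriminate.
Qed.

Lemma tm_step_eval_drops t t' : tm_step t t' -> eval_drops t t'.
Proof. intros []. apply eval_drops_plug; auto. apply eval_drops_beta; auto. Qed.

Lemma eval_no_infinite_tm_steps t k r : eval t k r ->
  ~ (exists f : nat -> tm, f 0 = t /\ forall n, tm_step (f n) (f (S n))).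
Proof.
  revert t r. induction k as [k IH] using lt_wf_ind. intros t r He [f [<- Hf]].
  destruct (tm_step_eval_drops _ _ (Hf 0) _ _ He) as [k' [-> Hk']].
  apply (IH k' (Nat.lt_succ_diag_r _) _ _ Hk'). exists (fun n => f (S n)). auto.
Qed.

(** * Termination of typed terms *)

Definition evaluates_into (P : tm -> Prop) (t : tm) : Prop :=
  exists k r, eval t k r /\
    (r = None \/ exists w, r = Some w /\ is_value w = true /\ P w).

Fixpoint all_rel (P : ty -> tm -> Prop) (As : list ty) (args : list tm) : Prop :=
  match As, args with
  | [], [] => True
  | A :: As, a :: args => is_value a = true /\ P A a /\ all_rel P As args
  | _, _ => False
  end.

(* Free variables and [tStar] belong to every [val_rel A]: applying them only
   gets stuck, which [eval] records as the result [None]. *)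
Fixpoint val_rel (A : ty) (v : tm) {struct A} : Prop :=
  match A with
  | TyUnit => True
  | TyArr A1 As B => forall n b, v = tLam n b ->
      forall a1 args, length (a1 :: args) = n ->
      is_value a1 = true -> val_rel A1 a1 -> all_rel val_rel As args ->
      evaluates_into (val_rel B) (subst (args_subst (a1 :: args)) b)
  end.

Definition subst_rel (D : list ty) (s : nat -> tm) : Prop :=
  forall i B, nth_error D i = Some B -> is_value (s i) = true /\ val_rel B (s i).

Lemma all_rel_Forall2 As args :
  all_rel val_rel As args <-> Forall2 (fun A a => is_value a = true /\ val_rel A a) As args.
Proof.
  revert args; induction As as [|A As IH]; intros [|a args]; simpl; split; intros H;
    auto; try tauto; try (inversion H; fail).
  - destruct H as (? & ? & ?). constructor; auto. apply IH; auto.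
  - inversion H; subst. rewrite IH. tauto.
Qed.

Lemma val_rel_not_lam A v : (forall n b, v <> tLam n b) -> val_rel A v.
Proof. destruct A; simpl; auto. intros H n b ->. exfalso. eapply H; eauto. Qed.

Lemma Forall2_nth_error_l {A B} (R : A -> B -> Prop) l1 l2 i a :
  Forall2 R l1 l2 -> nth_error l1 i = Some a -> exists b, nth_error l2 i = Some b /\ R a b.
Proof.
  intros H; revert i; induction H; intros [|i] Hi; simpl in *; try discriminate.
  - injection Hi as ->. eauto.
  - eauto.
Qed.

Lemma Forall2_rev {A B} (R : A -> B -> Prop) l1 l2 :
  Forall2 R l1 l2 -> Forall2 R (rev l1) (rev l2).
Proof. induction 1; simpl; auto. apply Forall2_app; auto. Qed.

Lemma subst_rel_args D A1 As a1 args s :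
  all_rel val_rel (A1 :: As) (a1 :: args) -> subst_rel D s ->
  subst_rel (rev (A1 :: As) ++ D)
    (fun i => subst (args_subst (a1 :: args)) (up_subst (length (a1 :: args)) s i)).
Proof.
  intros Hargs Hs i B Hi. apply all_rel_Forall2, Forall2_rev in Hargs as Hrev.
  set (n := length (a1 :: args)).
  assert (Hn : length (rev (A1 :: As)) = n)
    by (rewrite length_rev; apply Forall2_length in Hargs; exact Hargs).
  unfold up_subst. destruct (i <? n) eqn:Ei.
  - apply Nat.ltb_lt in Ei. rewrite nth_error_app1 in Hi by lia.
    destruct (Forall2_nth_error_l _ _ _ _ _ Hrev Hi) as [a [Ha HVa]].
    simpl subst. unfold args_subst. erewrite nth_error_nth; eauto.
  - apply Nat.ltb_ge in Ei. rewrite nth_error_app2 in Hi by lia.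
    rewrite args_subst_shift. apply Hs. rewrite <- Hi. f_equal. lia.
Qed.

Lemma val_rel_lam D n b A1 As B s :
  n = S (length As) ->
  (forall s', subst_rel (rev (A1 :: As) ++ D) s' -> evaluates_into (val_rel B) (subst s' b)) ->
  subst_rel D s -> val_rel (TyArr A1 As B) (tLam n (subst (up_subst n s) b)).
Proof.
  intros -> Hb Hs n' b' [= <- <-] a1 args Hn Ha1 HVa1 Hargs.
  rewrite subst_subst, <- Hn. apply Hb, subst_rel_args; simpl; auto.
Qed.

Lemma evaluates_into_list ts As :
  Forall2 (fun t A => evaluates_into (val_rel A) t) ts As ->
  exists k rs, eval_list ts k rs /\ (rs = None \/ exists vs, rs = Some vs /\
    Forall2 (fun A a => is_value a = true /\ val_rel A a) As vs).
Proof.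
  induction 1 as [|t A ts As [k [r [He [-> | (w & -> & Hw & HVw)]]]] _ IH].
  - exists 0, (Some []). split; [constructor|]. right. eauto.
  - exists k, None. split; auto. apply eval_list_stuck; auto.
  - destruct IH as [k2 [rs [Hl [-> | (vs & -> & Hvs)]]]].
    + exists (k + k2), None. split; auto. exact (eval_list_cons _ _ _ _ _ None He Hl).
    + exists (k + k2), (Some (w :: vs)). split.
      * exact (eval_list_cons _ _ _ _ _ (Some vs) He Hl).
      * right. eauto.
Qed.

Lemma eval_apply_value_rel w vs A1 As B :
  val_rel (TyArr A1 As B) w -> Forall2 (fun A a => is_value a = true /\ val_rel A a) (A1 :: As) vs ->
  exists k r, eval_apply (w :: vs) k r /\
    (r = None \/ exists u, r = Some u /\ is_value u = true /\ val_rel B u).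
Proof.
  intros HVw Hvs.
  assert (Hlam : (exists n b, w = tLam n b /\ length vs = n) \/
                 (forall n b args, w :: vs = tLam n b :: args -> length args <> n)).
  { destruct w as [| | |n b|]; try (right; intros; discriminate).
    destruct (Nat.eq_dec (length vs) n) as [<-|Hn]; [left; eauto|right].
    intros n' b' args [= <- <- <-]. exact Hn. }
  destruct Hlam as [(n & b & -> & Hn) | Hstuck].
  - inversion Hvs as [|? a1 ? args [Ha1 HVa1] Hargs]; subst.
    destruct (HVw _ _ eq_refl a1 args eq_refl Ha1 HVa1) as (k & r & He & Hr).
    { apply all_rel_Forall2; auto. }
    exists (S k), r. split; auto. constructor; auto.
  - exists 0, None. split; auto. constructor; auto.
Qed.

Lemma evaluates_into_app f a args A1 As B :
  evaluates_into (val_rel (TyArr A1 As B)) f -> evaluates_into (val_rel A1) a ->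
  Forall2 (fun t A => evaluates_into (val_rel A) t) args As ->
  evaluates_into (val_rel B) (tApp (f :: a :: args)).
Proof.
  intros [k [r [Hf [-> | (w & -> & Hw & HVw)]]]] Ha Hargs.
  { exists k, None. split; auto. apply eval_app_stuck, eval_list_stuck; auto. }
  destruct (evaluates_into_list (a :: args) (A1 :: As)) as (k2 & rs & Hl & [-> | (vs & -> & Hvs)]);
    auto.
  { exists (k + k2), None. split; auto.
    exact (eval_app_stuck _ _ (eval_list_cons _ _ _ _ _ None Hf Hl)). }
  destruct (eval_apply_value_rel w vs A1 As B) as (k3 & r3 & Happ & Hr3); auto.
  exists (k + k2 + k3), r3. split; auto.
  exact (eval_app _ _ _ _ _ (eval_list_cons _ _ _ _ _ (Some vs) Hf Hl) Happ).
Qed.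

Lemma tm_ty_evaluates_into G :
  (forall D t A, tm_ty G D t A ->
     forall s, subst_rel D s -> evaluates_into (val_rel A) (subst s t)) /\
  (forall D ts As, tm_tys G D ts As ->
     forall s, subst_rel D s -> Forall2 (fun t A => evaluates_into (val_rel A) t) (map (subst s) ts) As).
Proof.
  apply tm_ty_mutind; intros; simpl.
  - exists 0, (Some tStar). split; [constructor; auto|]. right. exists tStar. simpl; auto.
  - exists 0, (Some (tFree x)). split; [constructor; auto|]. right. exists (tFree x).
    repeat split. apply val_rel_not_lam. congruence.
  - destruct (H _ _ e) as [Hv HV]. exists 0, (Some (s i)). split; [constructor; auto|]. right; eauto.
  - exists 0, (Some (tLam n (subst (up_subst n s) b))). split; [constructor; auto|]. right.
    eexists; repeat split. eapply val_rel_lam; eauto.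
  - eapply evaluates_into_app; eauto.
  - constructor.
  - constructor; auto.
Qed.

Lemma tm_ty_closed_eval G t A : tm_ty G [] t A -> exists k r, eval t k r.
Proof.
  intros H. destruct (proj1 (tm_ty_evaluates_into G) _ _ _ H tBound) as [k [r [He _]]].
  { intros i B Hi. destruct i; discriminate. }
  rewrite subst_id in He by auto. eauto.
Qed.

(** * Unfolding declarations *)

Section SyntaxInd.
Variables (Pv : value -> Prop) (Pd : decl -> Prop) (Pt : term -> Prop).
Hypothesis P_star : Pv VStar.
Hypothesis P_lam : forall y ys D, Pd D -> Pv (VLam y ys D).
Hypothesis P_let : forall x V D, Pv V -> Pd D -> Pd (DLet x V D).
Hypothesis P_tm : forall M, Pt M -> Pd (DTm M).
Hypothesis P_var : forall x, Pt (TVar x).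
Hypothesis P_app : forall M N Ns, Pt M -> Pt N -> Forall Pt Ns -> Pt (TApp M N Ns).

Fixpoint value_nested_ind (V : value) : Pv V :=
  match V with
  | VStar => P_star
  | VLam y ys D => P_lam y ys D (decl_nested_ind D)
  end
with decl_nested_ind (D : decl) : Pd D :=
  match D with
  | DLet x V D => P_let x V D (value_nested_ind V) (decl_nested_ind D)
  | DTm M => P_tm M (term_nested_ind M)
  end
with term_nested_ind (M : term) : Pt M :=
  match M with
  | TVar x => P_var x
  | TApp M N Ns => P_app M N Ns (term_nested_ind M) (term_nested_ind N)
      ((fix go (l : list term) : Forall Pt l :=
         match l with
         | [] => Forall_nil _
         | t :: l => Forall_cons _ (term_nested_ind t) (go l)
         end) Ns)
  end.

Lemma syntax_mutind : (forall V, Pv V) /\ (forall D, Pd D) /\ (forall M, Pt M).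
Proof. split; [exact value_nested_ind | split; [exact decl_nested_ind | exact term_nested_ind]]. Qed.
End SyntaxInd.

Definition env_upd (r : var -> tm) (x : var) (c : tm) (w : var) : tm :=
  if Nat.eqb w x then c else r w.

Definition env_under (ps : list var) (r : var -> tm) (w : var) : tm :=
  match idx w (rev ps) with
  | Some j => tBound j
  | None => ren (plus (length ps)) (r w)
  end.

Fixpoint unfold_val (r : var -> tm) (V : value) : tm :=
  match V with
  | VStar => tStar
  | VLam y ys D => tLam (length (y :: ys)) (unfold_decl (env_under (y :: ys) r) D)
  end
with unfold_decl (r : var -> tm) (D : decl) : tm :=
  match D with
  | DLet x V D => unfold_decl (env_upd r x (unfold_val r V)) D
  | DTm M => unfold_term r M
  end
with unfold_term (r : var -> tm) (M : term) : tm :=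
  match M with
  | TVar x => r x
  | TApp M N Ns => tApp (unfold_term r M :: unfold_term r N :: map (unfold_term r) Ns)
  end.

Lemma idx_None w l : idx w l = None <-> ~ In w l.
Proof.
  induction l as [|a l IH]; simpl; [tauto|]. destruct (Nat.eqb_spec w a) as [->|Hne].
  - split; [discriminate | tauto].
  - destruct (idx w l) eqn:E; simpl.
    + split; [discriminate|]. intros H. exfalso. apply H. right.
      destruct (In_dec Nat.eq_dec w l) as [|Hn]; auto. apply IH in Hn. congruence.
    + split; auto. intros _ [C|C]; auto. apply IH; auto.
Qed.

Lemma idx_Some_lt w l j : idx w l = Some j -> j < length l.
Proof.
  revert j; induction l as [|a l IH]; simpl; intros j H; [discriminate|].
  destruct (Nat.eqb w a); [injection H as <-; lia|].
  destruct (idx w l) eqn:E; simpl in H; [injection H as <- | discriminate].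
  specialize (IH _ eq_refl). lia.
Qed.

Lemma idx_app w l1 l2 : idx w (l1 ++ l2) =
  match idx w l1 with Some j => Some j | None => option_map (plus (length l1)) (idx w l2) end.
Proof.
  induction l1 as [|a l1 IH]; simpl.
  - destruct (idx w l2); auto.
  - destruct (Nat.eqb w a); auto. rewrite IH. destruct (idx w l1), (idx w l2); auto.
Qed.

Lemma memv_false w l : memv w l = false <-> ~ In w l.
Proof.
  unfold memv. rewrite <- not_true_iff_false, existsb_exists. split.
  - intros H C. apply H. exists w. split; auto. apply Nat.eqb_refl.
  - intros H [x [Hx Ex]]. apply Nat.eqb_eq in Ex. subst. auto.
Qed.

Lemma memv_true w l : memv w l = true <-> In w l.
Proof.
  rewrite <- (negb_false_iff (memv w l)).
  destruct (memv w l) eqn:E; simpl.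
  - split; auto. intros _. destruct (In_dec Nat.eq_dec w l) as [|n]; auto.
    apply memv_false in n. congruence.
  - rewrite memv_false in E. split; [discriminate | tauto].
Qed.

Lemma in_concat_map {A B} (f : A -> list B) l x b :
  In x l -> In b (f x) -> In b (concat (map f l)).
Proof. intros. apply in_concat. exists (f x). split; auto. apply in_map; auto. Qed.

Lemma unfold_ext :
  (forall V r1 r2, (forall w, In w (fv_val V) -> r1 w = r2 w) -> unfold_val r1 V = unfold_val r2 V) /\
  (forall D r1 r2, (forall w, In w (fv_decl D) -> r1 w = r2 w) -> unfold_decl r1 D = unfold_decl r2 D) /\
  (forall M r1 r2, (forall w, In w (fv_term M) -> r1 w = r2 w) -> unfold_term r1 M = unfold_term r2 M).
Proof.
  apply syntax_mutind; intros; simpl in *; auto.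
  - f_equal. apply H. intros w Hw. unfold env_under.
    destruct (idx w (rev (y :: ys))) eqn:E; auto.
    rewrite H0; auto. apply filter_In. split; auto.
    rewrite negb_true_iff. change ((w =? y) || memv w ys) with (memv w (y :: ys)).
    apply memv_false. rewrite in_rev. apply idx_None. exact E.
  - rewrite (H r1 r2) by (intros; apply H1, in_or_app; auto).
    apply H0. intros w Hw. unfold env_upd. destruct (Nat.eqb w x) eqn:E; auto.
    apply H1, in_or_app. right. apply filter_In. rewrite E. auto.
  - f_equal. f_equal; [apply H | f_equal; [apply H0 |]].
    + intros; apply H2, in_or_app; auto.
    + intros; apply H2, in_or_app; right; apply in_or_app; auto.
    + apply map_ext_Forall. rewrite Forall_forall in *. intros t Ht. apply H1; auto.
      intros w Hw. apply H2, in_or_app; right; apply in_or_app; right.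
      eapply in_concat_map; eauto.
Qed.

Definition unfold_val_ext := proj1 unfold_ext.
Definition unfold_decl_ext := proj1 (proj2 unfold_ext).
Definition unfold_term_ext := proj2 (proj2 unfold_ext).

(* [unfold_decl] computed on the de Bruijn representation, hence invariant
   under alpha-equivalence; [E] lists the terms of the bound variables. *)
Fixpoint nunfold_val (E : list tm) (r : var -> tm) (v : nvalue) : tm :=
  match v with
  | NStar => tStar
  | NLam n d =>
      tLam n (nunfold_decl (map tBound (seq 0 n) ++ map (ren (plus n)) E)
                           (fun w => ren (plus n) (r w)) d)
  end
with nunfold_decl (E : list tm) (r : var -> tm) (d : ndecl) : tm :=
  match d with
  | NLet v d => nunfold_decl (nunfold_val E r v :: E) r d
  | NTm m => nunfold_term E r m
  end
with nunfold_term (E : list tm) (r : var -> tm) (m : nterm) : tm :=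
  match m with
  | NBound i => nth i E tStar
  | NFree x => r x
  | NApp m1 m2 ms => tApp (nunfold_term E r m1 :: nunfold_term E r m2 :: map (nunfold_term E r) ms)
  end.

Definition env_of_db (env : list var) (E : list tm) (r : var -> tm) (w : var) : tm :=
  match idx w env with Some i => nth i E tStar | None => r w end.

Lemma env_under_of_db ps env E r w : length E = length env ->
  env_under ps (env_of_db env E r) w =
  env_of_db (rev ps ++ env)
    (map tBound (seq 0 (length ps)) ++ map (ren (plus (length ps))) E)
    (fun w => ren (plus (length ps)) (r w)) w.
Proof.
  intros HE. set (n := length ps). unfold env_under, env_of_db.
  rewrite idx_app, length_rev. fold n.
  destruct (idx w (rev ps)) as [j|] eqn:E1.
  - assert (j < n) by (apply idx_Some_lt in E1; rewrite length_rev in E1; auto).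
    rewrite app_nth1 by (rewrite length_map, length_seq; lia).
    rewrite nth_indep with (d' := tBound 0) by (rewrite length_map, length_seq; lia).
    rewrite map_nth, seq_nth by lia. auto.
  - destruct (idx w env) as [i|]; simpl; auto.
    rewrite app_nth2 by (rewrite length_map, length_seq; lia).
    rewrite length_map, length_seq. replace (n + i - n) with i by lia.
    change tStar with (ren (plus n) tStar) at 2. rewrite map_nth. reflexivity.
Qed.

Lemma unfold_db :
  (forall V env E r, length E = length env ->
     unfold_val (env_of_db env E r) V = nunfold_val E r (db_val env V)) /\
  (forall D env E r, length E = length env ->
     unfold_decl (env_of_db env E r) D = nunfold_decl E r (db_decl env D)) /\
  (forall M env E r, length E = length env ->
     unfold_term (env_of_db env E r) M = nunfold_term E r (db_term env M)).
Proof.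
  apply syntax_mutind; intros.
  - auto.
  - cbn [unfold_val db_val nunfold_val]. f_equal. rewrite <- H.
    + apply unfold_decl_ext. intros w _. apply env_under_of_db; auto.
    + rewrite !length_app, !length_map, length_seq, length_rev, H0. auto.
  - simpl. rewrite <- H0 by (simpl; lia). rewrite <- H by auto. apply unfold_decl_ext.
    intros w _. unfold env_upd, env_of_db. simpl. destruct (w =? x); simpl; auto. destruct (idx w env); auto.
  - simpl; auto.
  - simpl. unfold env_of_db. destruct (idx x env); auto.
  - simpl. f_equal. f_equal; [auto | f_equal; [auto |]]. rewrite map_map.
    apply map_ext_Forall. rewrite Forall_forall in *. intros; auto.
Qed.

Lemma unfold_alpha D D' r : alpha_eq D D' -> unfold_decl r D = unfold_decl r D'.
Proof.
  intros H. change (unfold_decl (env_of_db [] [] r) D = unfold_decl (env_of_db [] [] r) D').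
  rewrite !(proj1 (proj2 unfold_db) _ [] [] r eq_refl), H. reflexivity.
Qed.

Scheme sc_val_ind' := Induction for sc_val Sort Prop
with sc_decl_ind' := Induction for sc_decl Sort Prop.
Combined Scheme sc_mutind from sc_val_ind', sc_decl_ind'.

Lemma unfold_env_upd_fresh V r x c :
  ~ In x (fv_val V) -> unfold_val (env_upd r x c) V = unfold_val r V.
Proof.
  intros Hx. apply unfold_val_ext. intros w Hw. unfold env_upd.
  destruct (Nat.eqb_spec w x) as [->|]; tauto.
Qed.

Lemma unfold_sc :
  (forall V V', sc_val V V' -> forall r, unfold_val r V = unfold_val r V') /\
  (forall D D', sc_decl D D' -> forall r, unfold_decl r D = unfold_decl r D').
Proof.
  apply sc_mutind; intros; simpl; try congruence.
  - apply unfold_alpha; auto.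
  - rewrite !unfold_env_upd_fresh by auto. apply unfold_decl_ext. intros w _. unfold env_upd.
    destruct (Nat.eqb_spec w x1), (Nat.eqb_spec w x2); congruence.
  - apply unfold_decl_ext. intros w Hw. unfold env_upd.
    destruct (Nat.eqb_spec w x) as [->|]; tauto.
Qed.

(** * Simulation of reduction steps *)

Lemma unfold_ren :
  (forall V s r, (forall v, s v <> v -> ~ In (s v) (bv_val V)) ->
     unfold_val r (ren_val s V) = unfold_val (fun v => r (s v)) V) /\
  (forall D s r, (forall v, s v <> v -> ~ In (s v) (bv_decl D)) ->
     unfold_decl r (ren_decl s D) = unfold_decl (fun v => r (s v)) D) /\
  (forall M s r, unfold_term r (ren_term s M) = unfold_term (fun v => r (s v)) M).
Proof.
  apply syntax_mutind; intros.
  - auto.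
  - cbn [ren_val unfold_val]. f_equal. set (ps := y :: ys) in *.
    rewrite H.
    + apply unfold_decl_ext. intros w _. unfold env_under.
      destruct (memv w ps) eqn:Em.
      * destruct (idx w (rev ps)) eqn:Ei; auto. exfalso. apply idx_None in Ei. apply Ei.
        rewrite <- in_rev. apply memv_true. auto.
      * assert (Ei : idx w (rev ps) = None)
          by (apply idx_None; rewrite <- in_rev; apply memv_false; auto).
        rewrite Ei. destruct (Nat.eq_dec (s w) w) as [Eq|Neq].
        -- rewrite Eq, Ei. auto.
        -- assert (Hn : ~ In (s w) ps).
           { intro C. apply (H0 w Neq). simpl. unfold ps in C. destruct C; auto.
             right. apply in_or_app; auto. }
           assert (Ei2 : idx (s w) (rev ps) = None) by (apply idx_None; rewrite <- in_rev; auto).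
           rewrite Ei2. auto.
    + intros v Hv. destruct (memv v ps) eqn:Em; [congruence|].
      intro C. apply (H0 v Hv). simpl. right. apply in_or_app. auto.
  - cbn [ren_decl unfold_decl].
    rewrite H by (intros v Hv C; apply (H1 v Hv); simpl; right; apply in_or_app; auto).
    rewrite H0.
    + apply unfold_decl_ext. intros w _. unfold env_upd. destruct (w =? x) eqn:E.
      * apply Nat.eqb_eq in E. subst. rewrite Nat.eqb_refl. auto.
      * destruct (s w =? x) eqn:E2; auto. apply Nat.eqb_eq in E2. exfalso.
        apply Nat.eqb_neq in E. apply (H1 w); [congruence|]. rewrite E2. simpl. auto.
    + intros v Hv. destruct (v =? x) eqn:E; [congruence|].
      intro C. apply (H1 v Hv). simpl. right. apply in_or_app. auto.
  - simpl. auto.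
  - simpl. auto.
  - simpl. f_equal. f_equal; [auto | f_equal; [auto |]]. rewrite map_map.
    apply map_ext_Forall. rewrite Forall_forall in *. intros; auto.
Qed.

Lemma unfold_subst :
  (forall V s r, subst s (unfold_val r V) = unfold_val (fun w => subst s (r w)) V) /\
  (forall D s r, subst s (unfold_decl r D) = unfold_decl (fun w => subst s (r w)) D) /\
  (forall M s r, subst s (unfold_term r M) = unfold_term (fun w => subst s (r w)) M).
Proof.
  apply syntax_mutind; intros.
  - auto.
  - cbn [unfold_val subst]. f_equal. rewrite H. apply unfold_decl_ext. intros w _. unfold env_under.
    destruct (idx w (rev (y :: ys))) eqn:E.
    + simpl. unfold up_subst. apply idx_Some_lt in E. rewrite length_rev in E. simpl length in E.
      apply Nat.ltb_lt in E. rewrite E. auto.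
    + apply subst_up_subst_shift.
  - cbn [unfold_decl]. rewrite H0. apply unfold_decl_ext. intros w _. unfold env_upd.
    destruct (w =? x); auto.
  - simpl. auto.
  - simpl. auto.
  - simpl. f_equal. f_equal; [auto | f_equal; [auto |]]. rewrite !map_map.
    apply map_ext_Forall. rewrite Forall_forall in *. intros; auto.
Qed.

Lemma combine_app {A B} (l1 l2 : list A) (m1 m2 : list B) : length l1 = length m1 ->
  combine (l1 ++ l2) (m1 ++ m2) = combine l1 m1 ++ combine l2 m2.
Proof. revert m1; induction l1; destruct m1; simpl; intros; try discriminate; f_equal; auto. Qed.

Lemma subst_map_spec ps qs w : length ps = length qs ->
  subst_map ps qs w = match idx w (rev ps) with Some j => nth j (rev qs) w | None => w end.
Proof.
  revert qs. induction ps as [|p ps IH] using rev_ind; intros qs Hl.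
  - destruct qs; [reflexivity | discriminate].
  - destruct qs as [|q qs _] using rev_ind; [rewrite length_app in Hl; simpl in Hl; lia|].
    rewrite !length_app in Hl; simpl in Hl.
    unfold subst_map. rewrite combine_app by lia. rewrite fold_left_app. simpl.
    fold (subst_map ps qs). rewrite !rev_app_distr. simpl.
    destruct (w =? p); auto. rewrite IH by lia. destruct (idx w (rev ps)); auto.
Qed.

Lemma subst_map_moved ps qs w : length ps = length qs ->
  subst_map ps qs w <> w -> In (subst_map ps qs w) qs.
Proof.
  intros Hl. rewrite subst_map_spec by auto. destruct (idx w (rev ps)) eqn:E; [|congruence].
  intros _. apply idx_Some_lt in E. rewrite length_rev in E. rewrite in_rev. apply nth_In.
  rewrite length_rev; lia.
Qed.

Lemma unfold_instantiate y ys z zs Dl r r' :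
  length ys = length zs ->
  (forall w, In w (z :: zs) -> ~ In w (bv_decl Dl)) ->
  (forall w, In w (fv_val (VLam y ys Dl)) -> r' w = r w) ->
  unfold_decl r' (ren_decl (subst_map (y :: ys) (z :: zs)) Dl) =
  subst (args_subst (map r' (z :: zs))) (unfold_decl (env_under (y :: ys) r) Dl).
Proof.
  intros Hlen Hcap Hr. set (ps := y :: ys).
  assert (Hlen' : length ps = length (z :: zs)) by (simpl; lia).
  rewrite (proj1 (proj2 unfold_ren)) by (intros v Hv; apply Hcap, subst_map_moved; auto).
  rewrite (proj1 (proj2 unfold_subst)). apply unfold_decl_ext. intros w Hw.
  unfold env_under. rewrite subst_map_spec by auto. fold ps.
  destruct (idx w (rev ps)) as [j|] eqn:Ei.
  - assert (j < length (rev (z :: zs))) by (apply idx_Some_lt in Ei; rewrite length_rev in *; lia).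
    symmetry. cbn [subst]. unfold args_subst. rewrite <- map_rev.
    rewrite nth_indep with (d' := r' w) by (rewrite length_map; auto).
    rewrite map_nth. auto.
  - replace (length ps) with (length (map r' (z :: zs))) by (rewrite length_map; auto).
    rewrite args_subst_shift. apply Hr. cbn [fv_val]. apply filter_In. split; auto.
    rewrite negb_true_iff. apply memv_false. rewrite in_rev. apply idx_None. exact Ei.
Qed.

Fixpoint env_prefix (r : var -> tm) (L : list (var * value)) : var -> tm :=
  match L with
  | [] => r
  | (x, V) :: L => env_prefix (env_upd r x (unfold_val r V)) L
  end.

Lemma unfold_plets L : forall r D, unfold_decl r (plets L D) = unfold_decl (env_prefix r L) D.
Proof. induction L as [|[x V] L IH]; simpl; auto. Qed.

Lemma env_prefix_app L1 L2 : forall r, env_prefix r (L1 ++ L2) = env_prefix (env_prefix r L1) L2.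
Proof. induction L1 as [|[x V] L IH]; simpl; auto. Qed.

Lemma env_prefix_notin L : forall r w, ~ In w (map fst L) -> env_prefix r L w = r w.
Proof.
  induction L as [|[x V] L IH]; simpl; auto. intros r w Hn. rewrite IH by tauto.
  unfold env_upd. destruct (Nat.eqb_spec w x) as [->|]; tauto.
Qed.

Definition value_env (r : var -> tm) : Prop := forall w, is_value (r w) = true.

Lemma value_env_upd r x V : value_env r -> value_env (env_upd r x (unfold_val r V)).
Proof. intros Hr w. unfold env_upd. destruct (w =? x); auto. destruct V; reflexivity. Qed.

Lemma value_env_prefix L : forall r, value_env r -> value_env (env_prefix r L).
Proof. induction L as [|[x V] L IH]; simpl; auto. intros r Hr. apply IH, value_env_upd, Hr. Qed.

Lemma plets_split_decl D : plets (fst (split_decl D)) (DTm (snd (split_decl D))) = D.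
Proof.
  induction D; simpl; auto. destruct (split_decl D) as [L M]. simpl in *. rewrite IHD. auto.
Qed.

Fixpoint unfold_ctx (r : var -> tm) (F : ectx) : tm_ctx :=
  match F with
  | Hole => cHole
  | Frame xs F Ms => cFrame (map r xs) (unfold_ctx r F) (map (unfold_term r) Ms)
  end.

Lemma unfold_mkapp r l : l <> [] -> unfold_term r (mkapp l) = mk_app (map (unfold_term r) l).
Proof. destruct l as [|a [|b l]]; simpl; intros; auto; congruence. Qed.

Lemma unfold_plug r F t : unfold_term r (plug F t) = plug_tm (unfold_ctx r F) (unfold_term r t).
Proof.
  induction F; simpl; auto. rewrite unfold_mkapp by (destruct l; discriminate).
  rewrite map_app. simpl. rewrite map_map, IHF. auto.
Qed.

Lemma fv_mkapp l w t : In t l -> In w (fv_term t) -> In w (fv_term (mkapp l)).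
Proof.
  destruct l as [|a [|b l]]; simpl; intros Ht Hw; try contradiction.
  - destruct Ht as [->|[]]; auto.
  - destruct Ht as [->|[->|Ht]].
    + apply in_or_app; auto.
    + apply in_or_app; right; apply in_or_app; auto.
    + apply in_or_app; right; apply in_or_app; right; eapply in_concat_map; eauto.
Qed.

Lemma unfold_ctx_ext F t r1 r2 :
  (forall w, In w (fv_term (plug F t)) -> r1 w = r2 w) -> unfold_ctx r1 F = unfold_ctx r2 F.
Proof.
  induction F; simpl; intros H; auto. f_equal.
  - apply map_ext_in. intros x Hx. apply H. eapply fv_mkapp.
    + apply in_or_app. left. apply in_map. eauto.
    + simpl. auto.
  - apply IHF. intros w Hw. apply H. eapply fv_mkapp; eauto. apply in_or_app. right. left. auto.
  - apply map_ext_in. intros M HM. apply unfold_term_ext. intros w Hw. apply H.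
    eapply fv_mkapp; eauto. apply in_or_app. right. right. auto.
Qed.

Lemma values_left_unfold_ctx r F : value_env r -> values_left (unfold_ctx r F).
Proof.
  intros Hr. induction F; simpl; auto. split; auto. apply Forall_forall. intros v Hv.
  apply in_map_iff in Hv. destruct Hv as [x [<- _]]. apply Hr.
Qed.

Lemma unfold_step_base D1 D2 r : value_env r -> step_base D1 D2 ->
  tm_step (unfold_decl r D1) (unfold_decl r D2).
Proof.
  intros Hr H. destruct H as [L1 L2 x y z ys zs Dl F Hlen Hok Hx Hcap Hfv Hfloat].
  set (sg := subst_map (y :: ys) (z :: zs)) in *.
  destruct (split_decl (ren_decl sg Dl)) as [Ld N] eqn:Es.
  rewrite !unfold_plets, !env_prefix_app. cbn [env_prefix]. rewrite env_prefix_app.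
  set (r1 := env_prefix r L1). set (clo := unfold_val r1 (VLam y ys Dl)).
  set (r2 := env_prefix (env_upd r1 x clo) L2).
  assert (Hr2 : value_env r2) by (apply value_env_prefix, value_env_upd, value_env_prefix, Hr).
  assert (Hx2 : r2 x = clo).
  { unfold r2. rewrite env_prefix_notin by auto. unfold env_upd. rewrite Nat.eqb_refl. auto. }
  cbn [unfold_decl]. rewrite !unfold_plug.
  assert (HF : unfold_ctx (env_prefix r2 Ld) F = unfold_ctx r2 F).
  { apply (unfold_ctx_ext F (TApp (TVar x) (TVar z) (map TVar zs))). intros w Hw.
    apply env_prefix_notin. exact (fun C => Hfloat w C Hw). }
  assert (HN : unfold_term (env_prefix r2 Ld) N = unfold_decl r2 (ren_decl sg Dl)).
  { rewrite <- (plets_split_decl (ren_decl sg Dl)), Es, unfold_plets. reflexivity. }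
  rewrite HF, HN. unfold sg. rewrite (unfold_instantiate _ _ _ _ _ r1); auto.
  2: { intros w Hw. unfold r2.
       rewrite env_prefix_notin by (intro C; apply (Hfv w); simpl; auto).
       unfold env_upd. destruct (Nat.eqb_spec w x) as [->|]; auto.
       exfalso. apply (Hfv x); simpl; auto. }
  cbn [unfold_term]. rewrite map_map, Hx2. unfold clo. cbn [unfold_val].
  apply tm_step_beta.
  - apply values_left_unfold_ctx; auto.
  - apply Forall_forall. intros v Hv. apply in_map_iff in Hv. destruct Hv as [w [<- _]]. apply Hr2.
  - rewrite length_map. simpl. auto.
Qed.

(** * Unfolding preserves typing *)

Lemma rev_combine {A B} (l : list A) (m : list B) : length l = length m ->
  rev (combine l m) = combine (rev l) (rev m).
Proof.
  revert m; induction l; destruct m; simpl; intros H; try discriminate; auto.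
  rewrite IHl by lia. rewrite combine_app by (rewrite !length_rev; lia). auto.
Qed.

Lemma lookup_combine qs Bs G w : length qs = length Bs ->
  lookup (combine qs Bs ++ G) w =
  match idx w qs with Some j => nth_error Bs j | None => lookup G w end.
Proof.
  revert Bs; induction qs; destruct Bs; simpl; intros H; try discriminate; auto.
  destruct (w =? a); auto. rewrite IHqs by lia. destruct (idx w qs); auto.
Qed.

Lemma lookup_extend G ps As w : length ps = length As ->
  lookup (extend G ps As) w =
  match idx w (rev ps) with Some j => nth_error (rev As) j | None => lookup G w end.
Proof.
  intros H. unfold extend. rewrite rev_combine, lookup_combine; auto. rewrite !length_rev; auto.
Qed.

Definition env_typed (G0 : ctx) (Gs : ctx) (D : list ty) (r : var -> tm) : Prop :=
  forall w B, lookup Gs w = Some B -> tm_ty G0 D (r w) B.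

Lemma unfold_term_typed G0 M : forall Gs A, typ_term Gs M A ->
  forall r D, env_typed G0 Gs D r -> tm_ty G0 D (unfold_term r M) A.
Proof.
  revert M. set (P := fun M => forall Gs A, typ_term Gs M A ->
    forall r D, env_typed G0 Gs D r -> tm_ty G0 D (unfold_term r M) A).
  assert (P_var : forall x, P (TVar x)).
  { intros x Gs A H r D Hr. inversion H; subst. apply Hr. auto. }
  assert (P_app : forall M N Ns, P M -> P N -> Forall P Ns -> P (TApp M N Ns)).
  { intros M N Ns IHM IHN IHNs Gs A H r D Hr.
    inversion_clear H as [|? ? ? ? ? As ? HM HN HNs]. econstructor; eauto.
    clear HM HN. revert As HNs.
    induction IHNs; intros As HNs; inversion HNs; subst; simpl; constructor; eauto. }
  exact (proj2 (proj2 (syntax_mutind (fun _ => True) (fun _ => True) P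
    I (fun _ _ _ _ => I) (fun _ _ _ _ _ => I) (fun _ _ => I) P_var P_app))).
Qed.

Lemma env_typed_under G0 Gs D r y ys A1 As :
  length ys = length As -> env_typed G0 Gs D r ->
  env_typed G0 (extend Gs (y :: ys) (A1 :: As)) (rev (A1 :: As) ++ D) (env_under (y :: ys) r).
Proof.
  intros Hlen Hr w B Hw. rewrite lookup_extend in Hw by (simpl; lia).
  unfold env_under. destruct (idx w (rev (y :: ys))) as [j|] eqn:Ei.
  - constructor. rewrite nth_error_app1; auto.
    apply idx_Some_lt in Ei. rewrite !length_rev in *. simpl in *. lia.
  - eapply (proj1 (tm_ty_ren G0)); eauto. intros i B' Hi.
    rewrite nth_error_app2 by (rewrite length_rev; simpl; lia).
    rewrite length_rev. simpl length. rewrite <- Hi. f_equal. lia.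
Qed.

Lemma unfold_decl_typed G0 Gs D A : typ_decl Gs D A ->
  forall r Dt, env_typed G0 Gs Dt r -> tm_ty G0 Dt (unfold_decl r D) A.
Proof.
  induction 1 as [Gs M A HM | Gs x D A HD IH | Gs x y ys Dl D A1 As C B Hlen HDl IHl HD IH];
    intros r Dt Hr; simpl.
  - eapply unfold_term_typed; eauto.
  - apply IH. intros w B Hw. simpl in Hw. unfold env_upd. destruct (w =? x).
    + injection Hw as <-. constructor.
    + auto.
  - apply IH. intros w B' Hw. simpl in Hw. unfold env_upd. destruct (w =? x).
    + injection Hw as <-. constructor; [simpl; lia|]. apply IHl, env_typed_under; auto.
    + auto.
Qed.

Theorem corollary1 (G : ctx) (D : decl) (A : ty) :
  typ_decl G D A ->
  ~ (exists f : nat -> decl, f 0 = D /\ forall n, red (f n) (f (S n))).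
Proof.
  intros HD [f [Hf0 Hred]].
  assert (Hty : tm_ty G [] (unfold_decl tFree D) A)
    by (eapply unfold_decl_typed; eauto; intros w B Hw; constructor; auto).
  destruct (tm_ty_closed_eval _ _ _ Hty) as (k & r & Heval).
  apply (eval_no_infinite_tm_steps _ _ _ Heval).
  exists (fun n => unfold_decl tFree (f n)). split; [rewrite Hf0; reflexivity|].
  intro n. destruct (Hred n) as (D1 & D2 & Hsc1 & Hstep & Hsc2).
  rewrite (proj2 unfold_sc _ _ Hsc1), <- (proj2 unfold_sc _ _ Hsc2).
  apply unfold_step_base; auto. intro w. reflexivity.
Qed.
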